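(* Let $G$ be a nonabelian group, let $\psi\in\operatorname{End}(G)$ satisfy $\psi([G,G])\le Z(G)$, and let $\alpha\in\mathscr{E}$. Writing $\psi_\alpha=\psi\circ\alpha$, define a binary operation on $G$ by $g\circ_\alpha h=g\,\psi_\alpha(g)\,h\,\psi_\alpha(g)^{-1}$. Then $(G,\circ_\alpha)$ is a group.
   Context: $Z(G)$ is the center and $[G,G]$ the commutator subgroup of $G$. $\mathscr{E}$ denotes the set of formal expressions $\alpha=n_1\phi_1+\cdots+n_t\phi_t$ with $t\ge0$, $n_i\in\mathbb Z$, $\phi_i\in\operatorname{End}(G)$ (the free group on $\operatorname{End}(G)$, written additively), acting on $G$ by $\alpha(g)=\phi_1(g^{n_1})\phi_2(g^{n_2})\cdots\phi_t(g^{n_t})$. *)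

From Stdlib Require Import ZArith List.
Set Implicit Arguments.

Section Grp.
Variable T : Type.

Definition group_laws (mul : T -> T -> T) (one : T) (inv : T -> T) : Prop :=
  (forall x y z, mul x (mul y z) = mul (mul x y) z) /\
  (forall x, mul one x = x /\ mul x one = x) /\
  (forall x, mul x (inv x) = one /\ mul (inv x) x = one).

Variables (mul : T -> T -> T) (one : T) (inv : T -> T).

Definition is_group_op (op : T -> T -> T) : Prop :=
  exists e i, group_laws op e i.

Definition nonabelian : Prop := exists x y, mul x y <> mul y x.

Definition is_endo (phi : T -> T) : Prop :=
  forall x y, phi (mul x y) = mul (phi x) (phi y).

Fixpoint npow (g : T) (n : nat) : T :=
  match n with O => one | S k => mul g (npow g k) end.

Definition zpow (g : T) (n : Z) : T :=
  match n with
  | Z0 => one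
  | Zpos p => npow g (Pos.to_nat p)
  | Zneg p => inv (npow g (Pos.to_nat p))
  end.

Definition comm (x y : T) : T := mul (mul (inv x) (inv y)) (mul x y).

Inductive in_derived : T -> Prop :=
  | der_one : in_derived one
  | der_comm : forall x y, in_derived (comm x y)
  | der_mul : forall a b, in_derived a -> in_derived b -> in_derived (mul a b)
  | der_inv : forall a, in_derived a -> in_derived (inv a).

Definition in_center (z : T) : Prop := forall x, mul z x = mul x z.

(* An element alpha = n_1 phi_1 + ... + n_t phi_t of the free group on End(G),
   represented by a formal word (list of pairs (n_i, phi_i)); its action is
   alpha(g) = phi_1(g^{n_1}) ... phi_t(g^{n_t}). *)
Definition word_endos (alpha : list (Z * (T -> T))) : Prop :=
  forall p, In p alpha -> is_endo (snd p).

Fixpoint act (alpha : list (Z * (T -> T))) (g : T) : T :=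
  match alpha with
  | nil => one
  | (n, phi) :: rest => mul (phi (zpow g n)) (act rest g)
  end.

Definition circ (psi : T -> T) (alpha : list (Z * (T -> T))) (g h : T) : T :=
  let a := psi (act alpha g) in mul (mul (mul g a) h) (inv a).

End Grp.

From Stdlib Require Import ZArith List Setoid Morphisms.
Set Implicit Arguments.

(* Modulo the derived subgroup [G,G] the group is abelian, and every
   endomorphism preserves [G,G]; hence g |-> alpha(g) is a homomorphism up to
   a factor in [G,G].  Since psi sends [G,G] into the centre,
   psi_alpha(g o h) = psi_alpha(g) psi_alpha(h) z with z central, and a central
   factor cancels in the conjugation h |-> c h c^-1 built into o; this is
   exactly what associativity needs. *)

Section Group.
Variables (T : Type) (mul : T -> T -> T) (one : T) (inv : T -> T).
Hypothesis HG : group_laws mul one inv.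

Local Notation "x * y" := (mul x y).
Local Notation "x ^-1" := (inv x) (at level 2, left associativity, format "x ^-1").
Local Notation "1" := one.

Lemma mulgA x y z : x * (y * z) = x * y * z.
Proof. apply HG. Qed.

Lemma mul1g x : 1 * x = x.
Proof. apply HG. Qed.

Lemma mulg1 x : x * 1 = x.
Proof. apply HG. Qed.

Lemma mulgV x : x * x^-1 = 1.
Proof. apply HG. Qed.

Lemma mulVg x : x^-1 * x = 1.
Proof. apply HG. Qed.

Lemma mulKg x y : x^-1 * (x * y) = y.
Proof. now rewrite mulgA, mulVg, mul1g. Qed.

Lemma mulKVg x y : x * (x^-1 * y) = y.
Proof. now rewrite mulgA, mulgV, mul1g. Qed.

Lemma mulgI x y z : x * y = x * z -> y = z.
Proof. intros E. now rewrite <- (mulKg x y), E, mulKg. Qed.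

Lemma eq_invg_mul x y : x * y = 1 -> y = x^-1.
Proof. intros E. apply mulgI with x. now rewrite E, mulgV. Qed.

Lemma invgK x : x^-1^-1 = x.
Proof. symmetry. apply eq_invg_mul, mulVg. Qed.

Lemma invMg x y : (x * y)^-1 = y^-1 * x^-1.
Proof.
  symmetry. apply eq_invg_mul.
  now rewrite <- mulgA, mulKVg, mulgV.
Qed.

Lemma invg1 : 1^-1 = 1.
Proof. symmetry. apply eq_invg_mul, mul1g. Qed.

Ltac assoc_r := repeat rewrite <- mulgA.

Local Notation der := (in_derived mul one inv).

Lemma der_conjg x d : der d -> der (x * d * x^-1).
Proof.
  intros Hd.
  replace (x * d * x^-1) with (d * comm mul inv d x^-1) by
    (unfold comm; now rewrite invgK; assoc_r; rewrite mulKVg).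
  now apply der_mul; [|apply der_comm].
Qed.

Definition eqmod_der x y := der (x^-1 * y).
Local Infix "≡" := eqmod_der (at level 70).

Global Instance eqmod_der_equiv : Equivalence eqmod_der.
Proof.
  split.
  - intros x. unfold eqmod_der. rewrite mulVg. apply der_one.
  - intros x y H. unfold eqmod_der.
    apply der_inv in H. now rewrite invMg, invgK in H.
  - intros x y z H1 H2. unfold eqmod_der.
    replace (x^-1 * z) with (x^-1 * y * (y^-1 * z)) by (now assoc_r; rewrite mulKVg).
    now apply der_mul.
Qed.

Global Instance mul_eqmod_der : Proper (eqmod_der ==> eqmod_der ==> eqmod_der) mul.
Proof.
  intros x x' Hx y y' Hy. unfold eqmod_der.
  replace ((x * y)^-1 * (x' * y')) with (y^-1 * (x^-1 * x') * y^-1^-1 * (y^-1 * y'))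
    by (now rewrite invgK, invMg; assoc_r; rewrite mulKVg).
  now apply der_mul; [apply der_conjg|].
Qed.

Global Instance inv_eqmod_der : Proper (eqmod_der ==> eqmod_der) inv.
Proof.
  intros x y H. unfold eqmod_der.
  replace (x^-1^-1 * y^-1) with (x * (x^-1 * y)^-1 * x^-1)
    by (rewrite invMg, !invgK; assoc_r; rewrite mulgV, mulg1; reflexivity).
  now apply der_conjg, der_inv.
Qed.

Lemma eqmod_mulC x y : x * y ≡ y * x.
Proof.
  unfold eqmod_der. rewrite invMg.
  replace (y^-1 * x^-1 * (y * x)) with (comm mul inv y x) by (unfold comm; now assoc_r).
  apply der_comm.
Qed.

Lemma eqmod_mulACA a b c d : a * b * (c * d) ≡ a * c * (b * d).
Proof. assoc_r. now rewrite (mulgA b), (eqmod_mulC b c), <- mulgA. Qed.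

Local Notation npow := (npow mul one).
Local Notation zpow := (zpow mul one inv).

Lemma npow_mul_eqmod x y n : npow (x * y) n ≡ npow x n * npow y n.
Proof.
  induction n as [|n IH]; simpl.
  - now rewrite mul1g.
  - now rewrite IH, eqmod_mulACA.
Qed.

Lemma zpow_mul_eqmod x y n : zpow (x * y) n ≡ zpow x n * zpow y n.
Proof.
  destruct n as [|p|p]; simpl.
  - now rewrite mul1g.
  - apply npow_mul_eqmod.
  - now rewrite npow_mul_eqmod, invMg, eqmod_mulC.
Qed.

Lemma zpow_der d n : der d -> der (zpow d n).
Proof.
  intros Hd.
  assert (Hn : forall k, der (npow d k)) by (induction k; simpl; now constructor).
  destruct n; simpl; [constructor | apply Hn | now constructor].
Qed.

Lemma zpow1g n : zpow 1 n = 1.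
Proof.
  assert (Hn : forall k, npow 1 k = 1) by (induction k; simpl; now rewrite ?mul1g).
  destruct n; simpl; rewrite ?Hn; [reflexivity | reflexivity | apply invg1].
Qed.

Section Endomorphism.
Variables (phi : T -> T) (Hphi : is_endo mul phi).

Lemma endo1 : phi 1 = 1.
Proof. apply mulgI with (phi 1). now rewrite <- Hphi, !mulg1. Qed.

Lemma endoV x : phi x^-1 = (phi x)^-1.
Proof. apply eq_invg_mul. now rewrite <- Hphi, mulgV, endo1. Qed.

Lemma endo_der d : der d -> der (phi d).
Proof.
  induction 1 as [| x y | a b _ IHa _ IHb | a _ IHa].
  - rewrite endo1. constructor.
  - unfold comm. rewrite !Hphi, !endoV. constructor.
  - rewrite Hphi. now constructor.
  - rewrite endoV. now constructor.
Qed.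

Lemma endo_eqmod : Proper (eqmod_der ==> eqmod_der) phi.
Proof.
  intros x y H. unfold eqmod_der.
  rewrite <- endoV, <- Hphi. now apply endo_der.
Qed.

End Endomorphism.

Local Notation act := (act mul one inv).

Lemma word_endos_cons n phi beta :
  word_endos mul ((n, phi) :: beta) -> is_endo mul phi /\ word_endos mul beta.
Proof.
  intros H. split.
  - apply (H (n, phi)). now left.
  - intros p Hp. apply H. now right.
Qed.

Lemma act1 alpha : word_endos mul alpha -> act alpha 1 = 1.
Proof.
  induction alpha as [|[n phi] beta IH]; simpl; intros Halpha; [reflexivity|].
  destruct (word_endos_cons Halpha) as [Hphi Hbeta].
  now rewrite zpow1g, endo1, IH, mul1g.
Qed.

Lemma act_der alpha d : word_endos mul alpha -> der d -> der (act alpha d).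
Proof.
  intros Halpha Hd.
  induction alpha as [|[n phi] beta IH]; simpl; [constructor|].
  destruct (word_endos_cons Halpha) as [Hphi Hbeta].
  constructor; [apply endo_der, zpow_der|apply IH]; assumption.
Qed.

Lemma act_mul_eqmod alpha x y :
  word_endos mul alpha -> act alpha (x * y) ≡ act alpha x * act alpha y.
Proof.
  induction alpha as [|[n phi] beta IH]; simpl; intros Halpha.
  - now rewrite mul1g.
  - destruct (word_endos_cons Halpha) as [Hphi Hbeta].
    pose proof (endo_eqmod Hphi).
    rewrite zpow_mul_eqmod, Hphi, IH by assumption.
    apply eqmod_mulACA.
Qed.

Lemma act_eqmod alpha : word_endos mul alpha -> Proper (eqmod_der ==> eqmod_der) (act alpha).
Proof.
  intros Halpha x y H.
  replace y with (x * (x^-1 * y)) by apply mulKVg.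
  rewrite act_mul_eqmod by assumption.
  unfold eqmod_der. rewrite mulKg. now apply act_der.
Qed.

Lemma endo_eqmod_central psi u v :
  is_endo mul psi -> (forall x, der x -> in_center mul (psi x)) ->
  u ≡ v -> exists z, in_center mul z /\ psi v = psi u * z.
Proof.
  intros Hpsi Hpsi_der H. exists (psi (u^-1 * v)). split.
  - now apply Hpsi_der.
  - now rewrite <- Hpsi, mulKVg.
Qed.

Section TwistedProduct.
Variables (psi : T -> T) (alpha : list (Z * (T -> T))).
Hypotheses (Hpsi : is_endo mul psi)
  (Hpsi_der : forall x, der x -> in_center mul (psi x))
  (Halpha : word_endos mul alpha).

Local Notation psi_a g := (psi (act alpha g)).
Local Infix "∘" := (circ mul one inv psi alpha) (at level 40, left associativity).

Lemma circ_eqmod g h : g ∘ h ≡ g * h.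
Proof.
  unfold circ. rewrite <- (mulgA (g * _)), eqmod_mulACA, mulgV, mulg1.
  reflexivity.
Qed.

Lemma psi_act_circ g h :
  exists z, in_center mul z /\ psi_a (g ∘ h) = psi_a g * psi_a h * z.
Proof.
  assert (E : act alpha g * act alpha h ≡ act alpha (g ∘ h)).
  { pose proof (act_eqmod Halpha).
    now rewrite circ_eqmod, act_mul_eqmod. }
  destruct (endo_eqmod_central Hpsi Hpsi_der E) as [z [Hz Ez]].
  exists z. split; [assumption|]. now rewrite Ez, Hpsi.
Qed.

Lemma circA x y z : x ∘ (y ∘ z) = x ∘ y ∘ z.
Proof.
  destruct (psi_act_circ x y) as [w [Hw Ew]].
  set (c := x ∘ y) in Ew |- *. unfold circ at 3. rewrite Ew. subst c. unfold circ.
  set (a := psi_a x). set (b := psi_a y).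
  rewrite !invMg. assoc_r. rewrite mulKg.
  rewrite (mulgA w), Hw, <- mulgA, mulKVg.
  reflexivity.
Qed.

Definition circ_inv g := (psi_a g)^-1 * g^-1 * psi_a g.

Lemma circ1g g : 1 ∘ g = g.
Proof. unfold circ. now rewrite act1, endo1, invg1, !mul1g, mulg1. Qed.

Lemma circg1 g : g ∘ 1 = g.
Proof. unfold circ. now rewrite mulg1, <- mulgA, mulgV, mulg1. Qed.

Lemma circgV g : g ∘ circ_inv g = 1.
Proof. unfold circ, circ_inv. assoc_r. now rewrite !mulKVg, mulgV. Qed.

End TwistedProduct.

End Group.

Lemma group_laws_of_right_inverse T (op : T -> T -> T) e i :
  (forall x y z, op x (op y z) = op (op x y) z) ->
  (forall x, op e x = x) -> (forall x, op x e = x) ->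
  (forall x, op x (i x) = e) -> group_laws op e i.
Proof.
  intros A L R V. repeat split; auto.
  transitivity (op (op (i x) x) (op (i x) (i (i x)))).
  - now rewrite V, R.
  - now rewrite A, <- (A (i x) x), V, R, V.
Qed.

Theorem proposition3p2 (T : Type) (mul : T -> T -> T) (one : T) (inv : T -> T)
  (HG : group_laws mul one inv)
  (Hnab : nonabelian mul)
  (psi : T -> T) (Hpsi : is_endo mul psi)
  (Hpsi_der : forall x, in_derived mul one inv x -> in_center mul (psi x))
  (alpha : list (Z * (T -> T))) (Halpha : word_endos mul alpha) :
  is_group_op (circ mul one inv psi alpha).
Proof.
  exists one, (circ_inv mul one inv psi alpha).
  apply group_laws_of_right_inverse.
  - now apply circA.
  - now apply circ1g.
  - now apply circg1.
  - now apply circgV.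
Qed.
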